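(* Let $n \ge k \ge 2$ be integers, $\alpha > 1$, $c > 0$, and let $\mathcal{F}$ be a family of $k$-uniform hypergraphs. Suppose $\mathcal{G}_n$ is an $(\mathcal{F},n,0,c)$-universal family of $k$-uniform hypergraphs on $n$ vertices such that $$c < \frac{\lambda_\alpha(\mathcal{G}_n)^{\alpha/(\alpha-1)}}{k!\,\mathrm{ex}(n,\mathcal{F})}.$$ If $H$ is a $k$-uniform $\mathcal{F}$-free hypergraph on $n$ vertices, then $\lambda_\alpha(H) \le \lambda_\alpha(\mathcal{G}_n)$. Furthermore, if $\lambda_\alpha(H) > (c\,k!\,\mathrm{ex}(n,\mathcal{F}))^{(\alpha-1)/\alpha}$ then $H \subseteq G$ for some $G \in \mathcal{G}_n$.
   Context: A $k$-uniform hypergraph is $\mathcal{F}$-free if it has no (not necessarily induced) subgraph isomorphic to a member of $\mathcal{F}$. $\mathrm{ex}(n,\mathcal{F})$ is the maximum number of edges of an $\mathcal{F}$-free $k$-uniform hypergraph on $n$ vertices. A family $\mathcal{G}$ of $\mathcal{F}$-free $k$-uniform hypergraphs is $(\mathcal{F},n,0,c)$-universal if every $\mathcal{F}$-free $k$-uniform hypergraph $H$ on $n$ vertices with $e(H) > c\,\mathrm{ex}(n,\mathcal{F})$ satisfies $H \subseteq G$ for some $G \in \mathcal{G}$. For a $k$-uniform hypergraph $H$ on $[n]$, $\tau_H(x,\dots,x) = k!\sum_{\{i_1,\dots,i_k\}\in E(H)} x_{i_1}\cdots x_{i_k}$ and $\lambda_\alpha(H) = \max_{\|x\|_\alpha=1}\tau_H(x,\dots,x)$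 with $\|x\|_\alpha = (\sum_i|x_i|^\alpha)^{1/\alpha}$; $\lambda_\alpha(\mathcal{G}) = \sup\{\lambda_\alpha(G) : G\in\mathcal{G}\}$. *)

From HB Require Import structures.
From mathcomp Require Import all_boot all_order all_algebra.
From mathcomp Require Import boolp classical_sets reals exp.
Set Implicit Arguments. Unset Strict Implicit. Unset Printing Implicit Defensive.
Import Order.TTheory GRing.Theory Num.Theory.
Local Open Scope ring_scope.

Record hg := Hg { hg_n : nat; hg_edges : {set {set 'I_hg_n}} }.

Definition uniform (m k : nat) (E : {set {set 'I_m}}) : Prop :=
  forall e, e \in E -> #|e| = k.

Definition contains (n : nat) (E : {set {set 'I_n}}) (F : hg) : Prop :=
  exists f : 'I_(hg_n F) -> 'I_n, injective f /\
    forall e, e \in hg_edges F -> f @: e \in E.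

Definition Ffree (Fam : hg -> Prop) (n : nat) (E : {set {set 'I_n}}) : Prop :=
  forall F, Fam F -> ~ contains E F.

(* H ⊆ G : H is (isomorphic to) a subgraph of G, both on [n] *)
Definition subhg (n : nat) (H G : {set {set 'I_n}}) : Prop :=
  exists f : 'I_n -> 'I_n, injective f /\ forall e, e \in H -> f @: e \in G.

Definition ex (Fam : hg -> Prop) (k n : nat) : nat :=
  \max_(E : {set {set 'I_n}} | `[< uniform k E /\ Ffree Fam E >]) #|E|.

(* tau_H(x,...,x) = k! * sum_{e in E} prod_{i in e} x_i *)
Definition tau {R : realType} (k n : nat) (E : {set {set 'I_n}}) (x : 'I_n -> R) : R :=
  (k`!)%:R * \sum_(e in E) \prod_(i in e) x i.

Definition anorm {R : realType} (n : nat) (a : R) (x : 'I_n -> R) : R :=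
  (\sum_(i < n) `|x i| `^ a) `^ (a^-1).

Definition lam {R : realType} (k n : nat) (a : R) (E : {set {set 'I_n}}) : R :=
  sup [set tau k E x | x in [set x : 'I_n -> R | anorm a x = 1]].

Definition lamfam {R : realType} (k n : nat) (a : R) (G : set {set {set 'I_n}}) : R :=
  sup [set lam k a E | E in G].

Definition universal {R : realType} (Fam : hg -> Prop) (k n : nat) (c : R)
    (G : set {set {set 'I_n}}) : Prop :=
  (forall E, G E -> uniform k E /\ Ffree Fam E) /\
  (forall H : {set {set 'I_n}}, uniform k H -> Ffree Fam H ->
     (#|H|%:R > c * (ex Fam k n)%:R) -> exists2 E, G E & subhg H E).

From HB Require Import structures.
From mathcomp Require Import all_boot all_order all_algebra.
From mathcomp Require Import boolp classical_sets reals exp.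
From mathcomp Require Import ring lra.
Set Implicit Arguments.
Unset Strict Implicit.
Unset Printing Implicit Defensive.
Import Order.TTheory GRing.Theory Num.Theory.
Local Open Scope ring_scope.

(* For a unit vector [x] of a k-uniform hypergraph with [m] edges, the numbers
   [z_e = prod_(i in e) |x_i|] satisfy [k! * sum_e z_e ^ a <= (sum_i |x_i| ^ a) ^ k = 1]
   (each monomial of the multinomial expansion is counted [k!] times), and by the
   power-mean inequality [(sum_e z_e) ^ a <= m ^ (a - 1) * sum_e z_e ^ a]. Hence
   [lambda_a(H) <= (k! e(H)) ^ ((a - 1) / a)], so a hypergraph with at most
   [c ex(n, F)] edges stays below the threshold, which by hypothesis is below
   [lambda_a(G_n)]. A hypergraph with more edges embeds in a member of [G_n] by
   universality, and [lambda_a] is monotone under embeddings since these are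
   relabellings of the coordinates. *)

Section powR_inequalities.
Variable R : realType.
Implicit Types (a q t u v x y : R).

(* Young's inequality [t * 1 <= t ^ a / a + 1 / q] for the conjugate exponent [q = a / (a - 1)]. *)
Lemma powR_bernoulli a t : 1 < a -> 0 <= t -> 1 + a * (t - 1) <= t `^ a.
Proof.
move=> a_gt1 t_ge0.
have a_gt0 : 0 < a by lra.
have q_gt0 : 0 < a / (a - 1) by apply: divr_gt0; lra.
have := conjugate_powR t_ge0 ler01 a_gt0 q_gt0.
rewrite powR1 invf_div mulr1 (_ : a^-1 + (a - 1) / a = 1); last first.
  by field; rewrite gt_eqF.
move=> /(_ erefl) young.
have : a * t <= t `^ a + (a - 1).
  move: young; rewrite -(ler_pM2l a_gt0) mulrDr !(mulrCA a) !mulfV ?gt_eqF //.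
  by rewrite mulr1 mul1r mulr1.
lra.
Qed.

Lemma powR_mean_le (T : finType) (A : {set T}) (z : T -> R) a :
  1 < a -> (forall e, 0 <= z e) ->
  #|A|%:R * ((\sum_(e in A) z e) / #|A|%:R) `^ a <= \sum_(e in A) z e `^ a.
Proof.
move=> a_gt1 z_ge0.
have rhs_ge0 : 0 <= \sum_(e in A) z e `^ a by apply: sumr_ge0 => e _; apply: powR_ge0.
have [->|A0] := eqVneq #|A| 0%N; first by rewrite mul0r.
set mu := _ / _.
have mu_ge0 : 0 <= mu by rewrite divr_ge0 ?sumr_ge0.
have [->|mu_neq0] := eqVneq mu 0; first by rewrite powR0 ?mulr0 // gt_eqF //; lra.
have mu_gt0 : 0 < mu by rewrite lt_neqAle eq_sym mu_neq0.
(* Bernoulli at [z e / mu], summed over [A]: the linear terms cancel since [mu] is the mean. *)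
have tangent e : mu `^ a * (1 + a * (z e / mu - 1)) <= z e `^ a.
  have -> : z e `^ a = mu `^ a * (z e / mu) `^ a.
    by rewrite -powRM ?(divr_ge0 (z_ge0 e) mu_ge0) // mulrC divfK.
  by rewrite ler_pM2l ?powR_gt0 // powR_bernoulli // divr_ge0.
apply: le_trans (ler_sum _ (fun e _ => tangent e)).
rewrite -mulr_sumr mulrC ler_pM2l ?powR_gt0 // big_split /= sumr_const.
rewrite -mulr_sumr big_split /= sumrN sumr_const -mulr_suml.
have -> : (\sum_(e in A) z e) / mu = #|A|%:R.
  rewrite /mu invf_div mulrCA mulfV ?mulr1 //.
  by apply: contra mu_neq0 => /eqP sum0; rewrite /mu sum0 mul0r.
by rewrite subrr mulr0 addr0.
Qed.

Lemma powR_sum_le (T : finType) (A : {set T}) (z : T -> R) a :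
  1 < a -> (forall e, 0 <= z e) ->
  (\sum_(e in A) z e) `^ a <= #|A|%:R `^ (a - 1) * \sum_(e in A) z e `^ a.
Proof.
move=> a_gt1 z_ge0; have [A0|A_gt0] := posnP #|A|.
  rewrite big_pred0; last by move=> e; rewrite (card0_eq A0).
  by rewrite A0 !powR0 ?mul0r // gt_eqF //; lra.
have m_gt0 : 0 < #|A|%:R :> R by rewrite ltr0n.
have m_ge0 := ltW m_gt0.
have mean_ge0 : 0 <= (\sum_(e in A) z e) / #|A|%:R.
  by rewrite divr_ge0 ?sumr_ge0.
rewrite -{1}[\sum_(e in A) z e](divfK (lt0r_neq0 m_gt0)) mulrC.
rewrite powRM // -mulr_powRB1 //; last by lra.
by rewrite [_ * _ `^ (a - 1)]mulrC -mulrA ler_wpM2l ?powR_ge0 //; apply: powR_mean_le.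
Qed.

Lemma prodr_powR (I : finType) (P : pred I) (f : I -> R) r :
  (forall i, 0 <= f i) ->
  (\prod_(i | P i) f i) `^ r = \prod_(i | P i) f i `^ r.
Proof.
move=> f_ge0.
suff [] : 0 <= \prod_(i | P i) f i /\
   (\prod_(i | P i) f i) `^ r = \prod_(i | P i) f i `^ r by [].
apply: (big_ind2 (fun u v => 0 <= u /\ u `^ r = v)) => //.
- by rewrite powR1.
- move=> u1 v1 u2 v2 [u1_ge0 <-] [u2_ge0 <-].
  by rewrite mulr_ge0 // powRM.
Qed.

Lemma ler_sum_subset (T : finType) (A B : {set T}) (F : T -> R) :
  A \subset B -> (forall i, 0 <= F i) ->
  \sum_(i in A) F i <= \sum_(i in B) F i.
Proof.
move=> /fintype.subsetP AB F_ge0; rewrite big_mkcond [X in _ <= X]big_mkcond.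
apply: ler_sum => i _; case: ifP => [/AB -> //|_].
by case: (i \in B).
Qed.

Lemma powRVK q x : q != 0 -> 0 <= x -> (x `^ q) `^ q^-1 = x.
Proof. by move=> q_neq0 x_ge0; rewrite -powRrM mulfV // powRr1. Qed.

Lemma le_powRV_of_powR_le a u v :
  0 < a -> 0 <= u -> u `^ a <= v -> u <= v `^ a^-1.
Proof.
move=> a_gt0 u_ge0 uv; rewrite -(powRVK (lt0r_neq0 a_gt0) u_ge0).
have v_ge0 : 0 <= v := le_trans (powR_ge0 _ _) uv.
by apply: ge0_ler_powR; rewrite ?invr_ge0 ?(ltW a_gt0) ?nnegrE ?powR_ge0.
Qed.

Lemma powR_lt_of_lt_powRV q x y :
  0 < q -> 0 <= x -> 0 <= y -> x < y `^ q^-1 -> x `^ q < y.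
Proof.
move=> q_gt0 x_ge0 y_ge0 xy.
rewrite -[y](powRVK (invr_neq0 (lt0r_neq0 q_gt0)) y_ge0) invrK.
by apply: gt0_ltr_powR; rewrite // nnegrE ?powR_ge0.
Qed.
End powR_inequalities.

Section tau_estimates.
Variables (R : realType) (n : nat).
Implicit Types (k : nat) (E : {set {set 'I_n}}) (x y : 'I_n -> R).

Lemma tau_ge0 k E x : (forall i, 0 <= x i) -> 0 <= tau k E x.
Proof. by move=> x_ge0; rewrite mulr_ge0 ?sumr_ge0 // => e _; apply: prodr_ge0. Qed.

Lemma tau_le_norm k E x : tau k E x <= tau k E (fun i => `|x i|).
Proof.
rewrite /tau ler_wpM2l // ler_sum // => e _.
by rewrite -normr_prod ler_norm.
Qed.

Lemma tau_subset k E E' x :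
  E \subset E' -> (forall i, 0 <= x i) -> tau k E x <= tau k E' x.
Proof.
move=> EE' x_ge0; rewrite ler_wpM2l // ler_sum_subset // => e.
exact: prodr_ge0.
Qed.

Lemma tau_imset k E x (f : 'I_n -> 'I_n) :
  injective f -> tau k [set f @: e | e : {set 'I_n} in E] x = tau k E (x \o f).
Proof.
move=> finj; rewrite /tau big_imset /=; last by move=> e1 e2 _ _; apply: imset_inj.
by congr (_ * _); apply: eq_bigr => e _; rewrite big_imset // => i j _ _; apply: finj.
Qed.

Definition link E i : {set {set 'I_n}} := [set e :\ i | e in [set e in E | i \in e]].

Lemma uniform_link k E i : uniform k.+1 E -> uniform k (link E i).
Proof.
move=> uE e' /imsetP[e]; rewrite inE => /andP[eE ie] ->.
by have := cardsD1 i e; rewrite ie uE // add1n => -[].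
Qed.

Lemma sum_prod_link E i y :
  \sum_(e in E | i \in e) \prod_(j in e) y j =
  y i * \sum_(e in link E i) \prod_(j in e) y j.
Proof.
rewrite /link big_imset /=; last first.
  move=> e1 e2; rewrite !inE => /andP[_ ie1] /andP[_ ie2] e12.
  by rewrite -(finset.setD1K ie1) -(finset.setD1K ie2) e12.
rewrite mulr_sumr; apply: eq_big => [e|e /andP[_ ie]]; first by rewrite inE.
by rewrite (big_setD1 i ie).
Qed.

Lemma uniform_sum_prod k E y : uniform k E ->
  k%:R * \sum_(e in E) \prod_(j in e) y j =
  \sum_i \sum_(e in E | i \in e) \prod_(j in e) y j.
Proof.
move=> uE; rewrite (exchange_big_dep (mem E)) /=; last by move=> i e _ /andP[].
rewrite mulr_sumr; apply: eq_bigr => e eE.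
rewrite [RHS](eq_bigl (fun i => i \in e)) => [|i]; last by rewrite eE.
by rewrite sumr_const uE // mulr_natl.
Qed.

Lemma tau_le_expr_sum k E y :
  (forall i, 0 <= y i) -> uniform k E -> tau k E y <= (\sum_i y i) ^+ k.
Proof.
move=> y_ge0; elim: k E => [|k IH] E uE.
  have E_sub : E \subset [set finset.set0].
    by apply/fintype.subsetP => e /uE /cards0_eq ->; rewrite set11.
  rewrite /tau fact0 mul1r expr0 (eq_bigr (fun=> 1)) => [|e /uE /cards0_eq ->].
    by rewrite sumr_const -(mulr1n 1) ler_nat (leq_trans (subset_leq_card E_sub)) ?cards1.
  by rewrite big_set0.
rewrite /tau factS natrM -mulrA mulrCA uniform_sum_prod // mulr_sumr.
rewrite exprS mulr_suml; apply: ler_sum => i _.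
rewrite sum_prod_link mulrCA ler_wpM2l //.
exact: IH (uniform_link uE).
Qed.
End tau_estimates.

Section spectral_radius.
Variables (R : realType) (n : nat) (a : R).
Hypotheses (n_gt0 : (0 < n)%N) (a_gt1 : 1 < a).
Implicit Types (k : nat) (E H G : {set {set 'I_n}}) (x : 'I_n -> R).

Let a_gt0 : 0 < a. Proof. by apply: lt_trans a_gt1. Qed.
Let exponent_ge0 : 0 <= (a - 1) / a. Proof. by rewrite divr_ge0 ?subr_ge0 ?ltW. Qed.

Lemma anorm1_sum x : anorm a x = 1 -> \sum_i `|x i| `^ a = 1.
Proof.
rewrite /anorm => /eqP; rewrite powR_eq1 invr_eq0 (gt_eqF a_gt0) orbF.
by rewrite ltNge sumr_ge0 // => [/predU1P[] //|i _]; apply: powR_ge0.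
Qed.

Lemma anorm_comp_inj x (g : 'I_n -> 'I_n) :
  injective g -> anorm a (x \o g) = anorm a x.
Proof. by move=> ginj; rewrite /anorm [in RHS](reindex_inj ginj). Qed.

Lemma anorm_norm x : anorm a (fun i => `|x i|) = anorm a x.
Proof. by rewrite /anorm; under eq_bigr do rewrite normr_id. Qed.

Lemma exists_anorm1_ge0 : exists x, anorm a x = 1 /\ forall i, 0 <= x i.
Proof.
pose i0 : 'I_n := Ordinal n_gt0.
exists (fun i => (i == i0)%:R); split => [|i]; last exact: ler0n.
rewrite /anorm (bigD1 i0) //= normr1 powR1 big1 ?addr0 ?powR1 // => i.
by move=> /negbTE ->; rewrite normr0 powR0 // gt_eqF.
Qed.

Lemma tau_le_card k E x : uniform k E -> anorm a x = 1 ->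
  tau k E x <= ((k`!)%:R * #|E|%:R) `^ ((a - 1) / a).
Proof.
move=> uE x1.
set K : R := (k`!)%:R; set m : R := #|E|%:R.
have K_ge0 : 0 <= K by rewrite ler0n.
pose z (e : {set 'I_n}) := \prod_(i in e) `|x i|.
have z_ge0 e : 0 <= z e by apply: prodr_ge0.
have sum_powR_le1 : K * \sum_(e in E) z e `^ a <= 1.
  rewrite -(expr1n R k) -(anorm1_sum x1).
  under eq_bigr do rewrite /z prodr_powR //.
  by apply: tau_le_expr_sum uE => i; apply: powR_ge0.
apply: le_trans (tau_le_norm k E x) _.
change (K * \sum_(e in E) z e <= (K * m) `^ ((a - 1) / a)).
rewrite powRrM; apply: le_powRV_of_powR_le => //; first by rewrite mulr_ge0 ?sumr_ge0.
rewrite powRM ?sumr_ge0 // -mulr_powRB1 //.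
apply: le_trans (ler_wpM2l _ (powR_sum_le E a_gt1 z_ge0)) _.
  by rewrite mulr_ge0 ?powR_ge0.
rewrite -/m powRM ?ler0n // -[X in _ <= X]mulr1.
rewrite [X in X <= _](_ : _ = K `^ (a - 1) * m `^ (a - 1) * (K * \sum_(e in E) z e `^ a)).
  by rewrite ler_wpM2l // mulr_ge0 ?powR_ge0.
by ring.
Qed.

Local Notation tau_sphere k E :=
  [set tau k E x | x in [set x : 'I_n -> R | anorm a x = 1]]%classic.

Lemma has_sup_tau_sphere k E : uniform k E -> has_sup (tau_sphere k E).
Proof.
move=> uE; split.
  by have [x [x1 _]] := exists_anorm1_ge0; exists (tau k E x); exists x.
exists (((k`!)%:R * #|E|%:R) `^ ((a - 1) / a)).
by move=> _ [x x1 <-]; apply: tau_le_card.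
Qed.

Lemma tau_le_lam k E x : uniform k E -> anorm a x = 1 -> tau k E x <= lam k a E.
Proof.
by move=> uE x1; apply: sup_upper_bound (has_sup_tau_sphere uE) _ _; exists x.
Qed.

Lemma lam_le_card k E :
  uniform k E -> lam k a E <= ((k`!)%:R * #|E|%:R) `^ ((a - 1) / a).
Proof.
move=> uE; apply: ge_sup; first by case: (has_sup_tau_sphere uE).
by move=> _ [x x1 <-]; apply: tau_le_card.
Qed.

Lemma lam_ge0 k E : uniform k E -> 0 <= lam k a E.
Proof.
move=> uE; have [x [x1 x_ge0]] := exists_anorm1_ge0.
exact: le_trans (tau_ge0 k E x_ge0) (tau_le_lam uE x1).
Qed.

(* An injective [f : 'I_n -> 'I_n] is a permutation, so unit vectors can be relabelled along [f^-1]. *)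
Lemma lam_subhg k H G :
  uniform k H -> uniform k G -> subhg H G -> lam k a H <= lam k a G.
Proof.
move=> uH uG [f [finj HG]].
apply: ge_sup; first by case: (has_sup_tau_sphere uH).
move=> _ [x x1 <-].
pose y := (fun i => `|x i|) \o invF finj.
have y1 : anorm a y = 1.
  by rewrite anorm_comp_inj ?anorm_norm //; apply: can_inj (f_invF finj).
have yf : (fun i => `|x i|) = y \o f by apply/funext => i; rewrite /y /= invF_f.
apply: le_trans (tau_le_norm _ _ _) _; rewrite yf -tau_imset //.
apply: le_trans (tau_le_lam uG y1); apply: tau_subset => [|i]; last exact: normr_ge0.
by apply/fintype.subsetP => _ /imsetP[e eH ->]; apply: HG.
Qed.

Lemma lam_le_lamfam k (Gn : set {set {set 'I_n}}) G :
  (forall G, Gn G -> uniform k G) -> Gn G -> lam k a G <= lamfam k a Gn.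
Proof.
move=> uGn GnG; apply: ub_le_sup; last by exists G.
exists (((k`!)%:R * #|{set 'I_n}|%:R) `^ ((a - 1) / a)).
move=> _ [G' GnG' <-].
apply: le_trans (lam_le_card (uGn _ GnG')) _.
apply: ge0_ler_powR => //; rewrite ?nnegrE ?mulr_ge0 ?ler0n //.
by rewrite ler_wpM2l ?ler0n // ler_nat max_card.
Qed.

Lemma lamfam_ge0 k (Gn : set {set {set 'I_n}}) :
  (forall G, Gn G -> uniform k G) -> 0 <= lamfam k a Gn.
Proof.
move=> uGn; have [[G GnG]|Gn0] := pselect (exists G, Gn G).
  exact: le_trans (lam_ge0 (uGn _ GnG)) (lam_le_lamfam uGn GnG).
rewrite /lamfam (_ : Gn = set0) ?image_set0 ?sup0 //.
by apply/seteqP; split => G // GnG; apply: Gn0; exists G.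
Qed.
End spectral_radius.

Theorem theorem4 (R : realType) (n k : nat) (a c : R) (Fam : hg -> Prop)
    (Gn : set {set {set 'I_n}}) :
  (2 <= k)%N -> (k <= n)%N -> 1 < a -> 0 < c ->
  (forall F, Fam F -> uniform k (hg_edges F)) ->
  universal Fam k c Gn ->
  c < lamfam k a Gn `^ (a / (a - 1)) / ((k`!)%:R * (ex Fam k n)%:R) ->
  forall H : {set {set 'I_n}}, uniform k H -> Ffree Fam H ->
    lam k a H <= lamfam k a Gn /\
    ((c * (k`!)%:R * (ex Fam k n)%:R) `^ ((a - 1) / a) < lam k a H ->
       exists2 G, Gn G & subhg H G).
Proof.
move=> k_ge2 k_le_n a_gt1 c_gt0 _ [univ_free univ_sub] hc H uH fH.
have n_gt0 : (0 < n)%N by apply: leq_trans k_le_n; apply: leq_trans k_ge2.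
have uGn G : Gn G -> uniform k G by move=> /univ_free [].
have q_gt0 : 0 < (a - 1) / a by rewrite divr_gt0 ?subr_gt0 // (lt_trans ltr01).
set K : R := (k`!)%:R; set X : R := (ex Fam k n)%:R.
have K_gt0 : 0 < K by rewrite ltr0n fact_gt0.
have X_gt0 : 0 < X.
  rewrite ltr0n lt0n; apply: contraTneq hc => ex0.
  by rewrite /X ex0 mulr0 invr0 mulr0 -leNgt ltW.
have threshold_lt : (c * K * X) `^ ((a - 1) / a) < lamfam k a Gn.
  apply: powR_lt_of_lt_powRV.
  - exact: q_gt0.
  - by rewrite !mulr_ge0 // ltW.
  - exact: (lamfam_ge0 n_gt0 a_gt1 uGn).
  - by rewrite invf_div -mulrA -ltr_pdivlMr ?mulr_gt0.
have [H_big|H_small] := ltrP (c * X) #|H|%:R.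
  have [G GnG HG] := univ_sub H uH fH H_big.
  split; last by exists G.
  apply: le_trans (lam_subhg n_gt0 a_gt1 uH (uGn _ GnG) HG) _.
  exact: (lam_le_lamfam n_gt0 a_gt1 uGn GnG).
have lamH : lam k a H <= (c * K * X) `^ ((a - 1) / a).
  apply: le_trans (lam_le_card n_gt0 a_gt1 uH) _.
  apply: (ge0_ler_powR (ltW q_gt0)).
  - by rewrite nnegrE mulr_ge0 ?ler0n.
  - by rewrite nnegrE !mulr_ge0 // ltW.
  - by rewrite -/K (mulrC c) -mulrA ler_wpM2l // ltW.
split; first exact: le_trans lamH (ltW threshold_lt).
by rewrite ltNge lamH.
Qed.
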